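(* Let $k$ be a field of characteristic $\neq 2$, let $\mathcal O$ be the Lie algebra described in the context, and let $\mathcal I$ be an ideal of $\mathcal O$. Let $J_{\mathcal I}=\{p(t)\in k[t]: v_0p(t)+v_1p_1(t)+v_2p_2(t)\in\mathcal I\text{ for some }p_1(t),p_2(t)\in k[t]\}$. Then: (i) $J_{\mathcal I}$ is an ideal of $k[t]$; (ii) $\mathcal O J_{\mathcal I}t(t-1)\subseteq\mathcal I\subseteq\mathcal O J_{\mathcal I}$.
   Context: $\mathcal O$ is the Lie algebra over $k$ which is a free $k[t]$-module with basis $v_0,v_1,v_2$, with $k[t]$-bilinear bracket determined by $[v_0,v_1]=-v_2(t-1)$, $[v_1,v_2]=-v_0$, $[v_2,v_0]=v_1t$ (it is isomorphic to the Onsager algebra). For a subset $J\subseteq k[t]$, $\mathcal O J$ denotes $v_0J\oplus v_1J\oplus v_2J$ when $J$ is an ideal; $\mathcal O Jt(t-1)=\mathcal O\,(Jt(t-1))$. *)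

From HB Require Import structures.
From mathcomp Require Import all_boot all_order all_algebra.
Set Implicit Arguments. Unset Strict Implicit. Unset Printing Implicit Defensive.
Import GRing.Theory.
Local Open Scope ring_scope.

(* An element of the Onsager-type algebra O over k:  v0 * a + v1 * b + v2 * c,
   with a b c : k[t]  (O is the free k[t]-module with basis v0, v1, v2). *)
Record Oelt (k : fieldType) := Ov { c0 : {poly k}; c1 : {poly k}; c2 : {poly k} }.

Section Ons.
Variable k : fieldType.

Definition Ozero : Oelt k := Ov 0 0 0.
Definition Oadd (x y : Oelt k) : Oelt k := Ov (c0 x + c0 y) (c1 x + c1 y) (c2 x + c2 y).
Definition Oscale (a : k) (x : Oelt k) : Oelt k :=
  Ov (a%:P * c0 x) (a%:P * c1 x) (a%:P * c2 x).

(* k[t]-bilinear bracket determined by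
   [v0,v1] = -v2 (t-1), [v1,v2] = -v0, [v2,v0] = v1 t. *)
Definition Obr (x y : Oelt k) : Oelt k :=
  Ov (- (c1 x * c2 y - c2 x * c1 y))
     ((c2 x * c0 y - c0 x * c2 y) * 'X)
     (- ((c0 x * c1 y - c1 x * c0 y) * ('X - 1))).

Definition is_Lie_ideal (I : Oelt k -> Prop) : Prop :=
  [/\ I Ozero,
      (forall x y, I x -> I y -> I (Oadd x y)),
      (forall a x, I x -> I (Oscale a x)) &
      (forall x y, I y -> I (Obr x y))].

Definition is_poly_ideal (J : {poly k} -> Prop) : Prop :=
  [/\ J 0,
      (forall p q, J p -> J q -> J (p + q)) &
      (forall r p, J p -> J (r * p))].

Definition inOJ (J : {poly k} -> Prop) (x : Oelt k) : Prop :=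
  [/\ J (c0 x), J (c1 x) & J (c2 x)].

Definition mulTT (J : {poly k} -> Prop) (q : {poly k}) : Prop :=
  exists2 p, J p & q = p * ('X * ('X - 1)).

Definition J_of (I : Oelt k -> Prop) (p : {poly k}) : Prop :=
  exists p1 p2, I (Ov p p1 p2).
End Ons.

(** Bracketing with the basis vectors moves coefficients between the three
    slots: [v2, y] and [v1, y] carry the v1- and v2-coefficients of y into the
    v0-slot, so every coefficient of an element of I lies in J_I, and
    [v2 r, [v2, y]] + [v1 r, [v1, y]] has v0-coefficient r p (t - (t - 1)) = r p,
    so J_I is an ideal.  Conversely, if y in I has v0-coefficient p, then
    [v0, [v2, y]] and [v0, [v1, y]] are -v2 p t (t - 1) and -v1 p t (t - 1),
    and one more bracket with v1 gives v0 p t (t - 1). *)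

From mathcomp Require Import all_boot all_order all_algebra.
From mathcomp Require Import ring.
Import GRing.Theory.
Local Open Scope ring_scope.

Section OnsagerIdeals.
Variable k : fieldType.
Implicit Types (p r a b c : {poly k}).

Lemma Obr_v0l r a b c :
  Obr (Ov r 0 0) (Ov a b c) = Ov 0 (- (r * c * 'X)) (- (r * b * ('X - 1))).
Proof. by rewrite /Obr /=; congr Ov; ring. Qed.

Lemma Obr_v1l r a b c :
  Obr (Ov 0 r 0) (Ov a b c) = Ov (- (r * c)) 0 (r * a * ('X - 1)).
Proof. by rewrite /Obr /=; congr Ov; ring. Qed.

Lemma Obr_v2l r a b c :
  Obr (Ov 0 0 r) (Ov a b c) = Ov (r * b) (r * a * 'X) 0.
Proof. by rewrite /Obr /=; congr Ov; ring. Qed.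

Variable I : Oelt k -> Prop.

Lemma J_of_c0 {x} : I x -> J_of I (c0 x).
Proof. by case: x => a b c Ix; exists b, c. Qed.

Hypothesis idealI : is_Lie_ideal I.

Let Ibr x {y} : I y -> I (Obr x y).
Proof. by have [_ _ _ br] := idealI; apply: br. Qed.

Lemma J_of_Lie_ideal : is_poly_ideal (J_of I).
Proof.
have [I0 Iadd _ _] := idealI.
split; first by exists 0, 0.
  move=> p q [p1 [p2 Ip]] [q1 [q2 Iq]].
  by exists (p1 + q1), (p2 + q2); exact: Iadd Ip Iq.
move=> r p [p1 [p2 Ip]].
have Ir := Iadd _ _ (Ibr (Ov 0 0 r) (Ibr (Ov 0 0 1) Ip))
                    (Ibr (Ov 0 r 0) (Ibr (Ov 0 1 0) Ip)).
have := J_of_c0 Ir.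
by rewrite !Obr_v2l !Obr_v1l /=; congr J_of; ring.
Qed.

Lemma Lie_ideal_sub_OJ x : I x -> inOJ (J_of I) x.
Proof.
case: x => a b c Ix; split; first by exists b, c.
  have := J_of_c0 (Ibr (Ov 0 0 1) Ix).
  by rewrite Obr_v2l /= mul1r.
have := J_of_c0 (Ibr (Ov 0 (-1) 0) Ix).
by rewrite Obr_v1l /= mulN1r opprK.
Qed.

Let T : {poly k} := 'X * ('X - 1).

Lemma J_of_mulTT_v2 {p} : J_of I p -> I (Ov 0 0 (p * T)).
Proof.
move=> [p1 [p2 Ip]].
have -> : Ov 0 0 (p * T) = Obr (Ov (-1) 0 0) (Obr (Ov 0 0 1) (Ov p p1 p2)).
  by rewrite Obr_v2l Obr_v0l /T; congr Ov; ring.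
exact/Ibr/Ibr.
Qed.

Lemma J_of_mulTT_v1 {p} : J_of I p -> I (Ov 0 (p * T) 0).
Proof.
move=> [p1 [p2 Ip]].
have -> : Ov 0 (p * T) 0 = Obr (Ov (-1) 0 0) (Obr (Ov 0 1 0) (Ov p p1 p2)).
  by rewrite Obr_v1l Obr_v0l /T; congr Ov; ring.
exact/Ibr/Ibr.
Qed.

Lemma J_of_mulTT_v0 {p} : J_of I p -> I (Ov (p * T) 0 0).
Proof.
move=> Jp.
have -> : Ov (p * T) 0 0 = Obr (Ov 0 (-1) 0) (Ov 0 0 (p * T)).
  by rewrite Obr_v1l; congr Ov; ring.
exact/Ibr/J_of_mulTT_v2.
Qed.

Lemma OJ_mulTT_sub_Lie_ideal x : inOJ (mulTT (J_of I)) x -> I x.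
Proof.
have [_ Iadd _ _] := idealI.
case: x => ? ? ? [[a Ja /= ->] [b Jb /= ->] [c Jc /= ->]].
have -> : Ov (a * T) (b * T) (c * T) =
          Oadd (Ov (a * T) 0 0) (Oadd (Ov 0 (b * T) 0) (Ov 0 0 (c * T))).
  by rewrite /Oadd /=; congr Ov; ring.
exact: Iadd _ _ (J_of_mulTT_v0 Ja) (Iadd _ _ (J_of_mulTT_v1 Jb) (J_of_mulTT_v2 Jc)).
Qed.

End OnsagerIdeals.

Theorem proposition4p6 (k : fieldType) (I : Oelt k -> Prop) :
  (2%:R : k) != 0 ->
  is_Lie_ideal I ->
  is_poly_ideal (J_of I) /\
  (forall x, inOJ (mulTT (J_of I)) x -> I x) /\
  (forall x, I x -> inOJ (J_of I) x).
Proof.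
move=> _ idealI; split; first exact: J_of_Lie_ideal.
split; [exact: OJ_mulTT_sub_Lie_ideal | exact: Lie_ideal_sub_OJ].
Qed.
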